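(* Let $p\ge3$. Let $\mathfrak{S}=\mathbb{Z}_p[[\lambda]]$ with $\delta$-structure determined by $\varphi(\lambda)=(\lambda+p)^p-p$, and let $\iota\colon\mathfrak{S}\to W(\mathbb{Z}_p)$ be the unique $\delta$-ring map lifting the quotient map $\mathfrak{S}\to\mathfrak{S}/\lambda=\mathbb{Z}_p$. Then there exists a unit $x_\lambda\in W(\mathbb{Z}_p)^\times$ such that $\iota(\lambda)=V(F(x_\lambda))$, where $F$ and $V$ are the Witt vector Frobenius and Verschiebung.
   Context: $W(\mathbb{Z}_p)$ denotes the ring of $p$-typical Witt vectors of $\mathbb{Z}_p$, with its canonical $\delta$-ring structure. *)

From mathcomp Require Import all_boot all_algebra.
Set Implicit Arguments. Unset Strict Implicit. Unset Printing Implicit Defensive.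
Import GRing.Theory Num.Theory.
Local Open Scope ring_scope.

(* An element is a sequence x : nat -> int, x n representing a class mod p^n;
   coherence: x (n+1) = x n mod p^n.  Equality is congruence at every level. *)
Definition Zp := nat -> int.
Definition Zp_coh (p : nat) (x : Zp) : Prop :=
  forall n, (x n.+1 = x n %[mod (p ^ n)%N%:Z])%Z.
Definition Zp_eq (p : nat) (x y : Zp) : Prop :=
  forall n, (x n = y n %[mod (p ^ n)%N%:Z])%Z.
Definition Zp_cst (c : int) : Zp := fun _ => c.
Definition Zp_add (x y : Zp) : Zp := fun m => x m + y m.
Definition Zp_opp (x : Zp) : Zp := fun m => - x m.
Definition Zp_mul (x y : Zp) : Zp := fun m => x m * y m.
Definition Zp_exp (x : Zp) (k : nat) : Zp := fun m => x m ^+ k.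

(* A Witt vector is its sequence of Witt coordinates (a_0, a_1, ...) in Z_p. *)
Definition Witt := nat -> Zp.
Definition W_wf (p : nat) (a : Witt) : Prop := forall i, Zp_coh p (a i).
Definition W_eq (p : nat) (a b : Witt) : Prop := forall i, Zp_eq p (a i) (b i).

Definition ghost (p n : nat) (a : Witt) : Zp :=
  fun m => \sum_(i < n.+1) (p ^ i)%N%:Z * (a i m) ^+ (p ^ (n - i)).

(* Since Z_p is p-torsion free, the ghost map W(Z_p) -> Z_p^N is injective and
   the Witt ring operations / Frobenius are the unique ones compatible with the
   ghost map (this is how the universal Witt polynomials are characterized).
   We therefore express them as relations through ghost components. *)
Definition W_is_add (p : nat) (a b c : Witt) : Prop :=
  forall n, Zp_eq p (ghost p n c) (Zp_add (ghost p n a) (ghost p n b)).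
Definition W_is_mul (p : nat) (a b c : Witt) : Prop :=
  forall n, Zp_eq p (ghost p n c) (Zp_mul (ghost p n a) (ghost p n b)).
Definition W_one : Witt := fun i => Zp_cst (if i == 0%N then 1 else 0).
Definition W_is_unit (p : nat) (a : Witt) : Prop :=
  exists b, W_wf p b /\ W_is_mul p a b W_one.
Definition W_is_frob (p : nat) (a b : Witt) : Prop :=
  forall n, Zp_eq p (ghost p n b) (ghost p n.+1 a).
Definition verschiebung (a : Witt) : Witt :=
  fun i => if i is j.+1 then a j else Zp_cst 0.
(* d = delta(a) for the canonical delta-structure: F(a) = a^p + p delta(a) *)
Definition W_is_delta (p : nat) (a d : Witt) : Prop :=
  forall n, Zp_eq p (Zp_mul (Zp_cst p%:Z) (ghost p n d))
                    (Zp_add (ghost p n.+1 a) (Zp_opp (Zp_exp (ghost p n a) p))).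

Definition PS := nat -> Zp.
Definition PS_wf (p : nat) (f : PS) : Prop := forall k, Zp_coh p (f k).
Definition PS_eq (p : nat) (f g : PS) : Prop := forall k, Zp_eq p (f k) (g k).
Definition PS_add (f g : PS) : PS := fun k => Zp_add (f k) (g k).
Definition PS_mul (f g : PS) : PS :=
  fun k m => \sum_(i < k.+1) f i m * g (k - i)%N m.
Definition PS_one : PS := fun k => Zp_cst (if k == 0%N then 1 else 0).
Definition PS_exp (f : PS) (n : nat) : PS := iter n (PS_mul f) PS_one.
Definition PS_lambda : PS := fun k => Zp_cst (if k == 1%N then 1 else 0).

Definition frob_poly (p : nat) : {poly int} :=
  ('X + (p%:Z)%:P) ^+ p - (p%:Z)%:P.
(* phi(f) = f((lambda+p)^p - p)  (phi is the identity on Z_p).  The substitution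
   converges p-adically: the coefficient of lambda^k in frob_poly^j is divisible
   by p^(j-k), so modulo p^m only the terms j < k + m matter. *)
Definition PS_frob (p : nat) (f : PS) : PS :=
  fun k m => \sum_(j < k + m) f j m * ((frob_poly p ^+ j)`_k).
(* d = delta(f) :  p d = phi(f) - f^p  (S is p-torsion free) *)
Definition PS_is_delta (p : nat) (f d : PS) : Prop :=
  forall k, Zp_eq p (Zp_mul (Zp_cst p%:Z) (d k))
                    (Zp_add (PS_frob p f k) (Zp_opp (PS_exp f p k))).

Definition is_delta_map_lifting (p : nat) (iota : PS -> Witt) : Prop :=
  (forall f, PS_wf p f -> W_wf p (iota f)) /\
  (forall f g, PS_wf p f -> PS_wf p g -> PS_eq p f g -> W_eq p (iota f) (iota g)) /\
  (forall f g, PS_wf p f -> PS_wf p g ->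
      W_is_add p (iota f) (iota g) (iota (PS_add f g))) /\
  (forall f g, PS_wf p f -> PS_wf p g ->
      W_is_mul p (iota f) (iota g) (iota (PS_mul f g))) /\
  W_eq p (iota PS_one) W_one /\
  (forall f d, PS_wf p f -> PS_wf p d -> PS_is_delta p f d ->
      W_is_delta p (iota f) (iota d)) /\
  (forall f, PS_wf p f -> Zp_eq p (iota f 0%N) (f 0%N)).

From Pilot Require Import Defs.
From mathcomp Require Import all_boot all_algebra ring zify.

Set Implicit Arguments. Unset Strict Implicit. Unset Printing Implicit Defensive.
Import GRing.Theory Num.Theory.
Local Open Scope ring_scope.

(* Since iota is a delta-ring map lifting evaluation at 0, its ghost components
   are w_n(iota f) = (phi^n f)(0).  For h = lambda + p we have phi(h) = h^p, so
   w_n(iota lambda) = p^(p^n) - p, which is p times x_n := p^(p^n - 1) - 1.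
   Taking x_0 := -1, the sequence (x_n) satisfies Dwork's congruences
   x_(n+1) = x_n mod p^(n+1) as soon as p >= 3, hence is the ghost sequence of
   an integral Witt vector x; then V(F x) has the ghost components of iota
   lambda, and ghost components determine Witt vectors over the p-torsion-free
   ring Z_p.  Finally x_n = -1 mod p, so 1/x_n = -(1 + e + e^2 + ...) with
   e = x_n + 1 converges p-adically and x is a unit. *)

Section IntegerWitt.
Variable p : nat.
Hypothesis p_pr : prime p.
Local Notation P := (p%:Z).

Lemma natz_expn i : (p ^ i)%N%:Z = P ^+ i.
Proof. by rewrite -[LHS]natz natrX natz. Qed.

Lemma expP_neq0 k : P ^+ k != 0.
Proof. by rewrite expf_neq0 // eqz_nat -lt0n prime_gt0. Qed.

Lemma eqz_mod_expn x y m :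
  (x = y %[mod (p ^ m)%N%:Z])%Z <-> (P ^+ m %| x - y)%Z.
Proof. by rewrite natz_expn -eqz_mod_dvd; split => [->|/eqP]. Qed.

Lemma dvdz_sub_trans d (x y z : int) :
  (d %| x - y)%Z -> (d %| y - z)%Z -> (d %| x - z)%Z.
Proof. by move=> dvd_xy dvd_yz; rewrite -[x](subrK y) -addrA rpredD. Qed.

Lemma dvdz_subXX (x y : int) n : (x - y %| x ^+ n - y ^+ n)%Z.
Proof. by rewrite subrXX dvdz_mulr. Qed.

Lemma dvdz_fermat (a : int) : (P %| a ^+ p - a)%Z.
Proof.
have Fp_frob (z : 'F_p) : z ^+ p = z.
  by rewrite -[z]natr_Zp -natrX -Fp_nat_mod // fermat_little // Fp_nat_mod.
by rewrite (dvdz_pcharf (pchar_Fp p_pr)) rmorphB rmorphXn /= Fp_frob subrr.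
Qed.

Lemma dvdz_lift_expp (x y : int) k : (0 < k)%N ->
  (P ^+ k %| x - y)%Z -> (P ^+ k.+1 %| x ^+ p - y ^+ p)%Z.
Proof.
move=> k_gt0 dvd_xy; rewrite subrXX exprSr dvdz_mul //.
have xy_Fp : (x%:~R : 'F_p) = y%:~R.
  apply/eqP; rewrite -subr_eq0 -rmorphB -(dvdz_pcharf (pchar_Fp p_pr)).
  by apply: dvdz_trans dvd_xy; rewrite -[X in (X %| _)%Z]expr1 dvdz_exp2l.
rewrite (dvdz_pcharf (pchar_Fp p_pr)) rmorph_sum /=.
rewrite (eq_bigr (fun _ => (y%:~R : 'F_p) ^+ p.-1)); last first.
  move=> i _; rewrite rmorphM !rmorphXn /= xy_Fp -exprD; congr (_ ^+ _).
  by rewrite subnK // -ltnS prednK ?prime_gt0.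
by rewrite sumr_const card_ord -mulr_natl pchar_Fp_0 // mul0r.
Qed.

Lemma dvdz_lift_expn (x y : int) k j : (0 < k)%N ->
  (P ^+ k %| x - y)%Z -> (P ^+ (k + j) %| x ^+ (p ^ j) - y ^+ (p ^ j))%Z.
Proof.
move=> k_gt0 dvd_xy; elim: j => [|j IHj]; first by rewrite addn0 !expr1.
by rewrite addnS expnSr !exprM dvdz_lift_expp // addn_gt0 k_gt0.
Qed.

Lemma dvdz_fermat_expn (a : int) j :
  (P ^+ j.+1 %| a ^+ (p ^ j.+1) - a ^+ (p ^ j))%Z.
Proof. by rewrite expnS exprM -add1n dvdz_lift_expn // expr1 dvdz_fermat. Qed.

Definition ghostz (a : nat -> int) n : int :=
  \sum_(i < n.+1) (p ^ i)%N%:Z * a i ^+ (p ^ (n - i)).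

Lemma ghostzE a n : ghostz a n = \sum_(i < n.+1) P ^+ i * a i ^+ (p ^ (n - i)).
Proof. by apply: eq_bigr => i _; rewrite natz_expn. Qed.

Lemma ghostz_recr a n :
  ghostz a n = \sum_(i < n) P ^+ i * a i ^+ (p ^ (n - i)) + P ^+ n * a n.
Proof. by rewrite ghostzE big_ord_recr /= subnn expn0 expr1. Qed.

Lemma ghostz_top_dvdz (a b : nat -> int) n K : (n <= K)%N ->
  (forall i : 'I_n,
     (P ^+ (K - i) %| a i ^+ (p ^ (n - i)) - b i ^+ (p ^ (n - i)))%Z) ->
  (P ^+ K %| ghostz a n - ghostz b n)%Z -> (P ^+ (K - n) %| a n - b n)%Z.
Proof.
move=> le_nK dvd_low dvd_gh.
rewrite -(dvdz_mul2l (expP_neq0 n)) -exprD subnKC // mulrBr.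
have -> : P ^+ n * a n - P ^+ n * b n = (ghostz a n - ghostz b n)
    - \sum_(i < n) P ^+ i * (a i ^+ (p ^ (n - i)) - b i ^+ (p ^ (n - i))).
  rewrite !ghostz_recr (eq_bigr _ (fun i _ => mulrBr _ _ _)) sumrB; ring.
rewrite rpredB //; apply: rpred_sum => i _.
have le_iK : (i <= K)%N by rewrite (leq_trans (ltnW (ltn_ord i))).
by rewrite -(subnKC le_iK) exprD dvdz_mul2l ?expP_neq0 // subnKC.
Qed.

Lemma ghostz_inj_dvdz (a b : nat -> int) k : (0 < k)%N ->
  (forall n, (P ^+ (k + n) %| ghostz a n - ghostz b n)%Z) ->
  forall n, (P ^+ k %| a n - b n)%Z.
Proof.
move=> k_gt0 dvd_gh; elim/ltn_ind => n IHn.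
rewrite -[k in (P ^+ k %| _)%Z](addnK n) ghostz_top_dvdz ?leq_addl // => i.
by rewrite -addnBA 1?ltnW // dvdz_lift_expn // IHn.
Qed.

Definition dwork_seq (u : nat -> int) := forall n, (P ^+ n.+1 %| u n.+1 - u n)%Z.

Lemma dwork_shift u : dwork_seq u -> dwork_seq (fun n => u n.+1).
Proof. by move=> du n; apply: dvdz_trans (du n.+1); rewrite dvdz_exp2l. Qed.

(* The first n+1 Witt coordinates of the vector with ghost components u, solved
   one at a time from the ghost equations; the divisions are exact when u is a
   Dwork sequence (ghostz_witt_of_ghost). *)
Fixpoint witt_prefix (u : nat -> int) n : seq int :=
  if n is n'.+1 then
    let s := witt_prefix u n' in
    rcons s ((u n - \sum_(i < n) P ^+ i * s`_i ^+ (p ^ (n - i))) %/ P ^+ n)%Z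
  else [:: u 0%N].

Definition witt_of_ghost u i := (witt_prefix u i)`_i.

Lemma size_witt_prefix u n : size (witt_prefix u n) = n.+1.
Proof. by elim: n => //= n IHn; rewrite size_rcons IHn. Qed.

Lemma nth_witt_prefix u n i : (i <= n)%N -> (witt_prefix u n)`_i = witt_of_ghost u i.
Proof.
elim: n => [|n IHn]; first by rewrite leqn0 => /eqP ->.
rewrite leq_eqVlt => /orP [/eqP -> //|lt_in].
by rewrite /= nth_rcons size_witt_prefix lt_in IHn.
Qed.

Lemma witt_of_ghostS u n : witt_of_ghost u n.+1 =
  ((u n.+1 - \sum_(i < n.+1) P ^+ i * witt_of_ghost u i ^+ (p ^ (n.+1 - i)))
     %/ P ^+ n.+1)%Z.
Proof.
rewrite {1}/witt_of_ghost /= nth_rcons size_witt_prefix ltnn eqxx.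
by congr ((_ - _) %/ _)%Z; apply: eq_bigr => i _; rewrite nth_witt_prefix // -ltnS.
Qed.

Lemma ghostz_witt_of_ghost u : dwork_seq u -> forall n, ghostz (witt_of_ghost u) n = u n.
Proof.
move=> du; elim=> [|n IHn]; first by rewrite /ghostz big_ord1 /= mul1r expr1.
rewrite ghostz_recr witt_of_ghostS.
set S := \sum_(i < n.+1) _; rewrite mulrC divzK; first by rewrite addrC subrK.
have -> : u n.+1 - S = (u n.+1 - u n) + (ghostz (witt_of_ghost u) n - S).
  by rewrite IHn addrA subrK.
rewrite rpredD // ghostzE -sumrB rpred_sum // => i _.
have le_in : (i <= n)%N by rewrite -ltnS.
rewrite -mulrBr -opprB mulrN rpredN subSn //.
have -> : P ^+ n.+1 = P ^+ i * P ^+ (n - i).+1 by rewrite -exprD addnS subnKC.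
by rewrite dvdz_mul2l ?expP_neq0 // dvdz_fermat_expn.
Qed.

End IntegerWitt.

Section WittVectorsZp.
Variable p : nat.
Hypothesis p_pr : prime p.
Local Notation P := (p%:Z).

Lemma Zp_coh_dvdz (x : nat -> int) : Zp_coh p x ->
  forall k j, (P ^+ k %| x (k + j)%N - x k)%Z.
Proof.
move=> coh_x k; elim=> [|j IHj]; first by rewrite addn0 subrr dvdz0.
have -> : x (k + j.+1)%N - x k = (x (k + j).+1 - x (k + j)%N) + (x (k + j)%N - x k).
  by rewrite addnS; ring.
rewrite rpredD // (dvdz_trans (dvdz_exp2l _ (leq_addr j k))) //.
exact/eqz_mod_expn/coh_x.
Qed.

Lemma ghost_W_eq a b : W_eq p a b -> forall n, Zp_eq p (ghost p n a) (ghost p n b).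
Proof.
move=> eq_ab n m; rewrite /ghost; elim/big_ind2: _ => // [x1 x2 y1 y2 eq_x eq_y|i _].
  by rewrite -modzDm eq_x eq_y modzDm.
by rewrite -modzMmr -modzXm eq_ab modzXm modzMmr.
Qed.

(* Ghost components determine well-formed Witt vectors over Z_p: at precision
   p^(k+n) the n-th ghost component determines the n-th coordinate mod p^k. *)
Lemma W_eq_ghost a b : W_wf p a -> W_wf p b ->
  (forall n, Zp_eq p (ghost p n a) (ghost p n b)) -> W_eq p a b.
Proof.
move=> wf_a wf_b eq_gh.
have dvd_top n k : (P ^+ k %| a n (k + n)%N - b n (k + n)%N)%Z.
  elim/ltn_ind: n k => n IHn k.
  rewrite -[k in (P ^+ k %| _)%Z](addnK n).
  apply: (ghostz_top_dvdz p_pr (a := fun i => a i (k + n)%N)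
                            (b := fun i => b i (k + n)%N) (leq_addl k n)) => [i|]; last first.
    exact/eqz_mod_expn/eq_gh.
  apply: dvdz_trans (dvdz_subXX _ _ _).
  have le_i : (i <= k + n)%N by rewrite (leq_trans (ltnW (ltn_ord i))) ?leq_addl.
  by have := IHn i (ltn_ord i) (k + n - i)%N; rewrite subnK.
move=> i m; apply/eqz_mod_expn.
have -> : a i m - b i m = (a i (m + i)%N - b i (m + i)%N)
    - (a i (m + i)%N - a i m) + (b i (m + i)%N - b i m) by ring.
apply: rpredD; last exact: Zp_coh_dvdz.
by apply: rpredB; [exact: dvd_top | exact: Zp_coh_dvdz].
Qed.

Lemma W_wf_cst (a : nat -> int) : W_wf p (fun i => Zp_cst (a i)).
Proof. by []. Qed.

Lemma ghost_W_one n m : ghost p n W_one m = 1.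
Proof.
rewrite /ghost big_ord_recl /= mul1r expr1n big1 ?addr0 // => i _.
by rewrite expr0n expn_eq0 eqn0Ngt prime_gt0 // mulr0.
Qed.

Lemma W_wf_verschiebung a : W_wf p a -> W_wf p (verschiebung a).
Proof. by move=> wf_a [|i] n; last exact: wf_a. Qed.

Lemma ghost0 a m : ghost p 0 a m = a 0%N m.
Proof. by rewrite /ghost big_ord1 /= mul1r expr1. Qed.

Lemma ghost_verschiebung0 a m : ghost p 0 (verschiebung a) m = 0.
Proof. by rewrite ghost0. Qed.

Lemma ghost_verschiebungS a n m :
  ghost p n.+1 (verschiebung a) m = P * ghost p n a m.
Proof.
rewrite /ghost big_ord_recl /= expr0n expn_eq0 eqn0Ngt prime_gt0 // mulr0 add0r.
rewrite mulr_sumr; apply: eq_bigr => i _.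
by rewrite /bump /= add1n subSS expnS PoszM mulrA.
Qed.

End WittVectorsZp.

Section XLambda.
Variable p : nat.
Hypothesis p_pr : prime p.
Hypothesis p_gt2 : (2 < p)%N.
Local Notation P := (p%:Z).

Lemma succ_lt_expn n : (0 < n)%N -> (n.+1 < p ^ n)%N.
Proof.
case: n => // n _; elim: n => [|n IHn]; first by rewrite expn1.
by rewrite expnS; apply: leq_trans (leq_mul p_gt2 IHn); lia.
Qed.

Definition pexp n : int := if n is 0 then 0 else P ^+ (p ^ n - 1).

Definition x_ghost n := pexp n - 1.

(* The truncated geometric series -(1 + e + ... + e^m) inverts e - 1 up to
   e^(m+1), which is divisible by p^(m+1) when e = pexp n. *)
Definition inv_x_ghost m n := - \sum_(k < m.+1) pexp n ^+ k.

Lemma dvdz_pexp n : (P ^+ n.+1 %| pexp n)%Z.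
Proof.
case: n => [|n]; first exact: dvdz0.
by rewrite dvdz_exp2l //; have := succ_lt_expn (ltn0Sn n); lia.
Qed.

Lemma dvdz_pexpX k n : (P ^+ (k + n).+1 %| pexp n ^+ k.+1)%Z.
Proof.
rewrite -addnS exprD exprSr dvdz_mul ?dvdz_pexp // dvdz_exp2r //.
exact: dvdz_trans (dvdz_exp2l P (ltn0Sn n)) (dvdz_pexp n).
Qed.

Lemma x_ghost_mul_inv m n : x_ghost n * inv_x_ghost m n = 1 - pexp n ^+ m.+1.
Proof. by rewrite mulrN -subrX1 opprB. Qed.

Lemma dwork_pexp : dwork_seq p pexp.
Proof.
move=> n; rewrite rpredB ?dvdz_pexp //.
by apply: dvdz_trans (dvdz_pexp n.+1); rewrite dvdz_exp2l.
Qed.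

Lemma dwork_x_ghost : dwork_seq p x_ghost.
Proof. by move=> n; rewrite /x_ghost opprB addrA subrK dwork_pexp. Qed.

Lemma dwork_inv_x_ghost m : dwork_seq p (inv_x_ghost m).
Proof.
move=> n; rewrite -opprD rpredN -sumrB rpred_sum // => k _.
exact: dvdz_trans (dwork_pexp n) (dvdz_subXX _ _ _).
Qed.

Definition x_lambda : Witt := fun i => Zp_cst (witt_of_ghost p x_ghost i).
Definition y_lambda : Witt :=
  fun i => Zp_cst (witt_of_ghost p (fun n => x_ghost n.+1) i).
Definition x_lambda_inv : Witt := fun i m => witt_of_ghost p (inv_x_ghost m) i.

Lemma ghost_x_lambda n m : ghost p n x_lambda m = x_ghost n.
Proof. exact: (ghostz_witt_of_ghost p_pr dwork_x_ghost). Qed.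

Lemma ghost_y_lambda n m : ghost p n y_lambda m = x_ghost n.+1.
Proof. exact: (ghostz_witt_of_ghost p_pr (dwork_shift dwork_x_ghost)). Qed.

Lemma ghost_x_lambda_inv n m : ghost p n x_lambda_inv m = inv_x_ghost m n.
Proof. exact: (ghostz_witt_of_ghost p_pr (dwork_inv_x_ghost m)). Qed.

Lemma W_wf_x_lambda_inv : W_wf p x_lambda_inv.
Proof.
move=> i [|m]; apply/eqz_mod_expn; first by rewrite expr0 dvd1z.
apply: (ghostz_inj_dvdz p_pr (a := witt_of_ghost p (inv_x_ghost m.+2))
                              (b := witt_of_ghost p (inv_x_ghost m.+1)) (ltn0Sn m)).
move=> n; rewrite !(ghostz_witt_of_ghost p_pr (dwork_inv_x_ghost _)).
have -> : inv_x_ghost m.+2 n - inv_x_ghost m.+1 n = - pexp n ^+ m.+2.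
  by rewrite /inv_x_ghost (big_ord_recr m.+2) /=; ring.
by rewrite rpredN; apply: dvdz_trans (dvdz_pexpX m.+1 n); rewrite dvdz_exp2l.
Qed.

Lemma W_is_unit_x_lambda : W_is_unit p x_lambda.
Proof.
exists x_lambda_inv; split; first exact: W_wf_x_lambda_inv.
move=> n m; apply/eqz_mod_expn.
rewrite /Defs.Zp_mul ghost_W_one // ghost_x_lambda ghost_x_lambda_inv x_ghost_mul_inv.
rewrite opprB addrC subrK; apply: dvdz_trans (dvdz_pexpX m n).
by rewrite dvdz_exp2l // leqW // leq_addr.
Qed.

Lemma W_is_frob_x_lambda : W_is_frob p x_lambda y_lambda.
Proof. by move=> n m; rewrite ghost_y_lambda ghost_x_lambda. Qed.

Lemma ghost_verschiebung_y_lambda n m :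
  ghost p n (verschiebung y_lambda) m = P ^+ (p ^ n) - P.
Proof.
case: n => [|n]; first by rewrite ghost_verschiebung0 expn0 expr1 subrr.
rewrite ghost_verschiebungS // ghost_y_lambda /x_ghost /pexp mulrBr mulr1.
by rewrite -exprS subn1 prednK // expn_gt0 prime_gt0.
Qed.

End XLambda.

Section DeltaMapGhosts.
Variable p : nat.
Hypothesis p_pr : prime p.
Variable iota : PS -> Witt.
Hypothesis iota_delta : is_delta_map_lifting p iota.
Local Notation P := (p%:Z).
Local Notation h := ('X + P%:P : {poly int}).

Definition PS_of_poly (q : {poly int}) : PS := fun k _ => q`_k.

Lemma PS_wf_of_poly q : PS_wf p (PS_of_poly q).
Proof. by []. Qed.

Lemma PS_wf_one : PS_wf p PS_one.
Proof. by []. Qed.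

Lemma PS_wf_lambda : PS_wf p PS_lambda.
Proof. by []. Qed.

Lemma PS_wf_add f g : PS_wf p f -> PS_wf p g -> PS_wf p (PS_add f g).
Proof. by move=> wf_f wf_g k n; rewrite /PS_add /Defs.Zp_add -modzDm wf_f wf_g modzDm. Qed.

Lemma PS_add_of_poly q r :
  PS_eq p (PS_add (PS_of_poly q) (PS_of_poly r)) (PS_of_poly (q + r)).
Proof. by move=> k n; rewrite /PS_add /Defs.Zp_add /PS_of_poly coefD. Qed.

Lemma PS_exp_of_poly q n k m : PS_exp (PS_of_poly q) n k m = (q ^+ n)`_k.
Proof.
elim: n k => [|n IHn] k; first by rewrite coef1 /PS_exp /= /PS_one; case: eqP.
rewrite /PS_exp iterS -/(PS_exp _ n) /PS_mul exprS coefM.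
by apply: eq_bigr => i _; rewrite IHn.
Qed.

Lemma PS_frob_of_poly (q : {poly int}) k m : (size q <= k + m)%N ->
  PS_frob p (PS_of_poly q) k m = (q \Po frob_poly p)`_k.
Proof.
move=> le_q; rewrite coef_comp_poly /PS_frob -(subnKC le_q) big_split_ord /=.
by rewrite [X in _ + X]big1 ?addr0 // => j _; rewrite /PS_of_poly nth_default ?mul0r ?leq_addr.
Qed.

Lemma comp_shift_frob_poly : h \Po frob_poly p = h ^+ p.
Proof. by rewrite comp_polyD comp_polyX comp_polyC /frob_poly subrK. Qed.

(* phi(lambda + p) = (lambda + p)^p, i.e. delta(lambda + p) = 0. *)
Lemma PS_frob_shift k m : (P ^+ m %| PS_frob p (PS_of_poly h) k m - (h ^+ p)`_k)%Z.
Proof.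
case: m => [|m]; first by rewrite expr0 dvd1z.
have [le2|] := leqP 2 (k + m.+1).
  by rewrite PS_frob_of_poly ?size_XaddC // comp_shift_frob_poly subrr dvdz0.
move=> lt2; have [-> ->] : k = 0%N /\ m = 0%N by lia.
rewrite /PS_frob big_ord1 expr0 coef1 mulr1 /PS_of_poly -!horner_coef0 !hornerE.
by rewrite expr1 rpredB // dvdz_exp // prime_gt0.
Qed.

Local Notation gi n q m := (ghost p n (iota (PS_of_poly q)) m).

Lemma ghost_iota_eq f g : PS_wf p f -> PS_wf p g -> PS_eq p f g ->
  forall n, Zp_eq p (ghost p n (iota f)) (ghost p n (iota g)).
Proof.
case: iota_delta => _ [iota_eq _] wf_f wf_g eq_fg n.
exact: ghost_W_eq (iota_eq f g wf_f wf_g eq_fg) n.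
Qed.

Lemma ghost_iota_add q r n m :
  (P ^+ m %| gi n (q + r) m - (gi n q m + gi n r m))%Z.
Proof.
case: iota_delta => _ [_ [iota_add _]]; apply/eqz_mod_expn.
rewrite -(ghost_iota_eq (PS_wf_add (PS_wf_of_poly q) (PS_wf_of_poly r))
           (PS_wf_of_poly _) (PS_add_of_poly q r) n m).
exact: iota_add.
Qed.

Lemma ghost_iota_one n m : (P ^+ m %| gi n 1 m - 1)%Z.
Proof.
case: iota_delta => _ [_ [_ [_ [iota_one _]]]]; apply/eqz_mod_expn.
have one_E : PS_eq p PS_one (PS_of_poly 1).
  by move=> k m'; rewrite /PS_one /PS_of_poly coef1; case: eqP.
rewrite -(ghost_W_one p_pr n m) -(ghost_iota_eq PS_wf_one (PS_wf_of_poly 1) one_E n m).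
exact: ghost_W_eq iota_one n m.
Qed.

Lemma ghost_iota_natC (c : nat) n m : (P ^+ m %| gi n (c%:Z)%:P m - c%:Z)%Z.
Proof.
elim: c => [|c IHc].
  have := ghost_iota_add 0 0 n m.
  by rewrite addr0 opprD addrA subrr add0r rpredN subr0.
rewrite intS (addrC 1) polyCD polyC1.
apply: dvdz_sub_trans (ghost_iota_add _ _ n m) _.
by rewrite opprD addrACA rpredD ?ghost_iota_one.
Qed.

Lemma ghost_iota_shift n m : (P ^+ m %| gi n h m - P ^+ (p ^ n))%Z.
Proof.
case: iota_delta => _ [_ [_ [_ [_ [iota_delta_map iota_lift]]]]].
elim: n m => [|n IHn] m.
  rewrite ghost0 expn0 expr1; apply/eqz_mod_expn.
  by rewrite (iota_lift _ (PS_wf_of_poly h)) /PS_of_poly coefD coefX coefC add0r.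
have delta_h : PS_is_delta p (PS_of_poly h) (PS_of_poly 0).
  move=> k m'; apply/eqz_mod_expn.
  rewrite /Defs.Zp_mul /Defs.Zp_add /Defs.Zp_opp /Zp_cst /PS_of_poly coef0 mulr0.
  by rewrite sub0r rpredN PS_exp_of_poly PS_frob_shift.
have := iota_delta_map _ _ (PS_wf_of_poly h) (PS_wf_of_poly 0) delta_h n m.
move/eqz_mod_expn; rewrite /Defs.Zp_mul /Defs.Zp_add /Defs.Zp_opp /Defs.Zp_exp /Zp_cst.
move=> delta_eq; apply: (@dvdz_sub_trans _ _ (gi n h m ^+ p)).
  have := ghost_iota_natC 0 n m; rewrite subr0 => gi0.
  have -> : gi n.+1 h m - gi n h m ^+ p
          = P * gi n 0 m - (P * gi n 0 m - (gi n.+1 h m + - gi n h m ^+ p)) by ring.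
  by rewrite rpredB // dvdz_mull.
by rewrite expnSr exprM; apply: dvdz_trans (IHn m) (dvdz_subXX _ _ _).
Qed.

Lemma ghost_iota_lambda n m :
  (P ^+ m %| ghost p n (iota PS_lambda) m - (P ^+ (p ^ n) - P))%Z.
Proof.
have lambda_E : PS_eq p PS_lambda (PS_of_poly 'X).
  by move=> k m'; rewrite /PS_lambda /Zp_cst /PS_of_poly coefX; case: eqP.
apply: (@dvdz_sub_trans _ _ (gi n 'X m)).
  exact/eqz_mod_expn/(ghost_iota_eq PS_wf_lambda (PS_wf_of_poly _) lambda_E).
have dvd_add := ghost_iota_add 'X P%:P n m.
have dvd_h := ghost_iota_shift n m.
have dvd_P := ghost_iota_natC p n m.
have -> : gi n 'X m - (P ^+ (p ^ n) - P)
        = - (gi n h m - (gi n 'X m + gi n P%:P m)) + (gi n h m - P ^+ (p ^ n))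
          - (gi n P%:P m - P) by ring.
by rewrite rpredB // rpredD // rpredN.
Qed.

End DeltaMapGhosts.

Theorem lemma6p14 (p : nat) (iota : PS -> Witt)
  (hp : prime p) (hp3 : (2 < p)%N) (hiota : is_delta_map_lifting p iota) :
  exists x y : Witt,
    [/\ W_wf p x, W_wf p y, W_is_unit p x, W_is_frob p x y &
        W_eq p (iota PS_lambda) (verschiebung y)].
Proof.
exists (x_lambda p), (y_lambda p); split.
- exact: W_wf_cst.
- exact: W_wf_cst.
- exact: W_is_unit_x_lambda.
- exact: W_is_frob_x_lambda.
have [wf_iota _] := hiota.
apply: W_eq_ghost => //; first exact: wf_iota (PS_wf_lambda p).
  exact/W_wf_verschiebung/W_wf_cst.
move=> n m; apply/eqz_mod_expn.
by rewrite ghost_verschiebung_y_lambda //; apply: ghost_iota_lambda.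
Qed.
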